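(* For every real $t\geq 1$: $C(t)>0$ if and only if $t<\vartheta^-(G)$.
   Context: Let $G$ be a simple graph with vertex set $V=\{1,\dots,n\}$, edge set $E$ and adjacency matrix $A$. Let $e$ denote the all-ones vector, $\langle M,N\rangle=\operatorname{trace}(M^TN)$, and $Y\geq 0$ mean entrywise nonnegativity. For real $t\geq 1$, $P(t)$ is the semidefinite program $$\min \tfrac12\langle A,Y\rangle \ \text{ s.t. } \begin{pmatrix} Y & e\\ e^T & t\end{pmatrix}\succeq 0,\ \operatorname{diag}(Y)=e,\ Y\geq 0,$$ over symmetric $n\times n$ matrices $Y$, and $C(t)$ denotes its optimal value. Szegedy's number is $$\vartheta^-(G)=\min\ t \ \text{ s.t. } \begin{pmatrix} Y & e\\ e^T & t\end{pmatrix}\succeq 0,\ \operatorname{diag}(Y)=e,\ Y_{i,j}=0\ \forall [i,j]\in E,\ Y\geq 0.$$ *)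

From HB Require Import structures.
From mathcomp Require Import all_boot all_order all_algebra.
From mathcomp Require Import boolp classical_sets reals.
Set Implicit Arguments. Unset Strict Implicit. Unset Printing Implicit Defensive.
Import Order.TTheory GRing.Theory Num.Theory.
Local Open Scope ring_scope.
Local Open Scope classical_set_scope.

(* A simple graph on V = 'I_n (vertices 0..n-1 standing for 1..n):
   a symmetric irreflexive boolean relation. *)
Definition simple_graph (n : nat) (adj : rel 'I_n) : Prop :=
  (forall i, ~~ adj i i) /\ (forall i j, adj i j = adj j i).

Definition adjmx (R : realType) (n : nat) (adj : rel 'I_n) : 'M[R]_n :=
  \matrix_(i, j) (adj i j)%:R.

Definition psd (R : realType) (m : nat) (M : 'M[R]_m) : Prop :=
  M^T = M /\ forall x : 'cV[R]_m, 0 <= (x^T *m M *m x) ord0 ord0.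

Definition frob (R : realType) (n : nat) (M N : 'M[R]_n) : R := \tr (M^T *m N).

Definition onesv (R : realType) (n : nat) : 'cV[R]_n := const_mx 1.

Definition border (R : realType) (n : nat) (Y : 'M[R]_n) (t : R) : 'M[R]_(n + 1) :=
  block_mx Y (onesv R n) (onesv R n)^T (t%:M : 'M[R]_1).

Definition feasP (R : realType) (n : nat) (t : R) (Y : 'M[R]_n) : Prop :=
  Y^T = Y /\ psd (border Y t) /\ (forall i, Y i i = 1) /\ (forall i j, 0 <= Y i j).

(* optimal value C(t) of P(t) (the minimum; expressed as an infimum) *)
Definition Cval (R : realType) (n : nat) (adj : rel 'I_n) (t : R) : R :=
  inf [set v | exists Y, feasP t Y /\ v = (1/2) * frob (adjmx R adj) Y].

(* Szegedy's number theta^-(G) (the minimum; expressed as an infimum) *)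
Definition theta_minus (R : realType) (n : nat) (adj : rel 'I_n) : R :=
  inf [set t | exists Y : 'M[R]_n, feasP t Y /\ (forall i j, adj i j -> Y i j = 0)].

From HB Require Import structures.
From mathcomp Require Import all_boot all_order all_algebra.
From mathcomp Require Import boolp classical_sets reals.
From mathcomp Require Import ring lra.
Import Order.TTheory GRing.Theory Num.Theory.
Set Implicit Arguments. Unset Strict Implicit. Unset Printing Implicit Defensive.
Local Open Scope ring_scope.

(* If [t < theta^-(G)] but [C(t) = 0], take [Y] feasible for [P(t)] with
   [d = <A, Y>] small: replacing the edge entries of [Y] by [d I] keeps the
   bordered matrix positive semidefinite (the edge part has nonnegative
   entries summing to [d]), and rescaling by [1 / (1 + d)] restores the unit
   diagonal, giving a certificate for [theta^-] at level [t (1 + d) < theta^-].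
   Conversely the constraints of [P] are jointly convex in [(t, Y)]; if
   [theta^-(G) <= t], mixing a near-optimal certificate [(t0, Y0)] of
   [theta^-] (objective [0]) with the all-ones matrix at level [1] gives points
   of [P(t)] with objective [(t0 - t) / (t0 - 1) * <A, J> / 2], which tends to
   [0] because [t0 >= 2] whenever [G] has an edge. *)

Lemma sum_deltal (S : pzSemiRingType) (I : finType) (f : I -> S) m :
  \sum_k (k == m)%:R * f k = f m.
Proof.
rewrite (bigD1 m) //= eqxx mul1r big1 ?addr0 // => k /negbTE ->.
by rewrite mul0r.
Qed.

Section BorderedForms.
Variables (R : realType) (n : nat).
Implicit Types (Y D : 'M[R]_n) (x : 'I_n -> R) (a t s : R).

Definition qform Y x : R := \sum_i \sum_j x i * Y i j * x j.

Definition border_qform Y t x s : R := qform Y x + 2 * s * \sum_i x i + t * s ^+ 2.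

Definition border_psd Y t : Prop := forall x s, 0 <= border_qform Y t x s.

Lemma border_qformE Y t (x : 'cV[R]_n) s :
  ((col_mx x s%:M)^T *m border Y t *m col_mx x s%:M) ord0 ord0
  = border_qform Y t (fun i => x i ord0) s.
Proof.
rewrite /border tr_col_mx mul_row_block mul_row_col !mxE /border_qform /qform.
rewrite big_ord1 !mxE eqxx mulr1n.
under eq_bigr => j _ do rewrite !mxE big_ord1 !mxE eqxx mulr1n.
under [\sum_j _ * onesv R n _ _]eq_bigr => j _ do rewrite !mxE mulr1.
rewrite big_ord1 !mxE eqxx mulr1n.
under eq_bigr => j _ do rewrite mulrDl mulr1 big_distrl /=.
rewrite big_split /= exchange_big /= -mulr_sumr.
under eq_bigr => i _ do under eq_bigr => j _ do rewrite mxE.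
rewrite expr2; ring.
Qed.

Lemma psd_borderP Y t : Y^T = Y -> psd (border Y t) <-> border_psd Y t.
Proof.
move=> symY; split=> [[_ psdB] x s | psdB].
  have := psdB (col_mx (\col_i x i) s%:M); rewrite border_qformE.
  by under [fun i => _]funext => i do rewrite mxE.
split; first by rewrite /border tr_block_mx symY trmxK tr_scalar_mx.
by move=> z; rewrite -(vsubmxK z) (mx11_scalar (dsubmx z)) border_qformE.
Qed.

Lemma qformD Y1 Y2 x : qform (Y1 + Y2) x = qform Y1 x + qform Y2 x.
Proof.
rewrite /qform -big_split; apply: eq_bigr => i _.
by rewrite -big_split; apply: eq_bigr => j _; rewrite mxE /=; ring.
Qed.

Lemma qformZ a Y x : qform (a *: Y) x = a * qform Y x.
Proof.
rewrite /qform mulr_sumr; apply: eq_bigr => i _.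
by rewrite mulr_sumr; apply: eq_bigr => j _; rewrite mxE; ring.
Qed.

Lemma qform_const1 x : qform (const_mx 1) x = (\sum_i x i) ^+ 2.
Proof.
rewrite /qform expr2 big_distrl; apply: eq_bigr => i _; rewrite big_distrr.
by apply: eq_bigr => j _; rewrite mxE mulr1.
Qed.

Lemma qform_scalar1 x : qform 1%:M x = \sum_i x i ^+ 2.
Proof.
apply: eq_bigr => i _; rewrite (bigD1 i) //= big1 => [|j /negbTE ji].
  by rewrite !mxE eqxx mulr1n mulr1 addr0 expr2.
by rewrite !mxE eq_sym ji mulr0n mulr0 mul0r.
Qed.

(* [2 * x i * x j <= x i ^+ 2 + x j ^+ 2], hence [x i * x j <= \sum_k x k ^+ 2]. *)
Lemma qform_le_sum_sqr D x : (forall i j, 0 <= D i j) ->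
  qform D x <= (\sum_i \sum_j D i j) * \sum_i x i ^+ 2.
Proof.
move=> D_ge0; set S := \sum_i x i ^+ 2.
have sqr_le_S i : x i ^+ 2 <= S.
  by rewrite /S (bigD1 i) //= lerDl sumr_ge0 // => k _; rewrite sqr_ge0.
rewrite mulr_suml; apply: ler_sum => i _; rewrite mulr_suml; apply: ler_sum => j _.
have := sqr_le_S i; have := sqr_le_S j; have := sqr_ge0 (x i - x j).
have := D_ge0 i j; nra.
Qed.

Lemma qform_pair Y i j :
  qform Y (fun k => (k == i)%:R + (k == j)%:R) = Y i i + Y i j + Y j i + Y j j.
Proof.
have sum_pair (f : 'I_n -> R) : \sum_k ((k == i)%:R + (k == j)%:R) * f k = f i + f j.
  by under eq_bigr => k _ do rewrite mulrDl; rewrite big_split /= !sum_deltal.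
rewrite /qform; under eq_bigr => k _ do under eq_bigr => l _ do
  rewrite mulrAC -mulrA.
under eq_bigr => k _ do rewrite -mulr_sumr sum_pair.
by rewrite sum_pair; ring.
Qed.

Lemma border_psd_const1 t : 1 <= t -> border_psd (const_mx 1) t.
Proof.
move=> t_ge1 x s; rewrite /border_qform qform_const1.
have -> : (\sum_i x i) ^+ 2 + 2 * s * \sum_i x i + t * s ^+ 2
          = (\sum_i x i + s) ^+ 2 + (t - 1) * s ^+ 2 by ring.
by rewrite addr_ge0 ?sqr_ge0 // mulr_ge0 ?subr_ge0 ?sqr_ge0.
Qed.

Lemma border_psd_scalar1 : border_psd 1%:M n%:R.
Proof.
move=> x s; have -> : border_qform 1%:M n%:R x s = \sum_i (x i + s) ^+ 2.
  rewrite (eq_bigr (fun i => x i ^+ 2 + (2 * s * x i + s ^+ 2))) => [|i _]; last by ring.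
  rewrite !big_split /= -mulr_sumr sumr_const card_ord /border_qform qform_scalar1.
  by rewrite -mulr_natl; ring.
by rewrite sumr_ge0 // => i _; rewrite sqr_ge0.
Qed.

Lemma border_psd_le Y t t' : border_psd Y t -> t <= t' -> border_psd Y t'.
Proof.
move=> psdY le_tt' x s; have := psdY x s; rewrite /border_qform.
have : 0 <= (t' - t) * s ^+ 2 by rewrite mulr_ge0 ?subr_ge0 ?sqr_ge0.
lra.
Qed.

Lemma border_psd_convex l Y1 Y2 t1 t2 : 0 <= l <= 1 ->
  border_psd Y1 t1 -> border_psd Y2 t2 ->
  border_psd (l *: Y1 + (1 - l) *: Y2) (l * t1 + (1 - l) * t2).
Proof.
move=> /andP[l_ge0 l_le1] psd1 psd2 x s.
have -> : border_qform (l *: Y1 + (1 - l) *: Y2) (l * t1 + (1 - l) * t2) x s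
          = l * border_qform Y1 t1 x s + (1 - l) * border_qform Y2 t2 x s.
  by rewrite /border_qform qformD !qformZ; ring.
by rewrite addr_ge0 // mulr_ge0 ?subr_ge0.
Qed.

Lemma border_psd_scale c Y t : 0 < c -> border_psd Y t -> border_psd (c *: Y) (t / c).
Proof.
move=> c_gt0 psdY x s; have := psdY x (s / c).
have -> : border_qform (c *: Y) (t / c) x s = c * border_qform Y t x (s / c).
  by rewrite /border_qform qformZ; field; rewrite gt_eqF.
exact: mulr_ge0 (ltW c_gt0).
Qed.

Lemma border_psdD Y D t :
  border_psd Y t -> (forall x, 0 <= qform D x) -> border_psd (Y + D) t.
Proof.
move=> psdY psdD x s; have := psdY x s; have := psdD x.
rewrite /border_qform qformD; lra.
Qed.

End BorderedForms.

Section Feasibility.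
Variables (R : realType) (n : nat).
Implicit Types (Y : 'M[R]_n) (t : R).

Lemma feasPE t Y : feasP t Y <->
  [/\ Y^T = Y, border_psd Y t, forall i, Y i i = 1 & forall i j, 0 <= Y i j].
Proof.
split=> [[symY [psdB [diagY Y_ge0]]] | [symY psdY diagY Y_ge0]].
  by split=> //; apply/(psd_borderP _ symY).
by split=> //; split=> //; apply/psd_borderP.
Qed.

Lemma feasP_const1 t : 1 <= t -> feasP t (const_mx 1 : 'M[R]_n).
Proof.
move=> t_ge1; apply/feasPE; split.
- by apply/matrixP => i j; rewrite !mxE.
- exact: border_psd_const1.
- by move=> i; rewrite mxE.
- by move=> i j; rewrite mxE.
Qed.

Lemma feasP_scalar1 : feasP n%:R (1%:M : 'M[R]_n).
Proof.
apply/feasPE; split.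
- exact: tr_scalar_mx.
- exact: border_psd_scalar1.
- by move=> i; rewrite mxE eqxx.
- by move=> i j; rewrite mxE ler0n.
Qed.

Lemma feasP_ge0 t Y : feasP t Y -> 0 <= t.
Proof.
case/feasPE=> _ psdY _ _; have := psdY (fun=> 0) 1.
rewrite /border_qform /qform (eq_bigr (fun=> 0)) => [|i _]; last first.
  by rewrite big1 // => j _; rewrite !mul0r.
by rewrite !big1_eq expr1n; lra.
Qed.

Lemma feasP_le t t' Y : feasP t Y -> t <= t' -> feasP t' Y.
Proof.
case/feasPE=> symY psdY diagY Y_ge0 le_tt'.
by apply/feasPE; split=> //; apply: border_psd_le le_tt'.
Qed.

Lemma feasP_convex l t1 t2 Y1 Y2 : 0 <= l <= 1 -> feasP t1 Y1 -> feasP t2 Y2 ->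
  feasP (l * t1 + (1 - l) * t2) (l *: Y1 + (1 - l) *: Y2).
Proof.
move=> l01 /feasPE[sym1 psd1 diag1 ge1] /feasPE[sym2 psd2 diag2 ge2].
have /andP[l_ge0 l_le1] := l01.
apply/feasPE; split.
- by rewrite linearD !linearZ /= sym1 sym2.
- exact: border_psd_convex.
- by move=> i; rewrite !mxE diag1 diag2; ring.
- by move=> i j; rewrite !mxE addr_ge0 // mulr_ge0 ?subr_ge0.
Qed.

End Feasibility.

Section EdgeVanishing.
Variables (R : realType) (n : nat) (adj : rel 'I_n).
Implicit Types (Y : 'M[R]_n) (t : R).

Definition vanishes_on_edges Y : Prop := forall i j, adj i j -> Y i j = 0.

Definition adj_pairing Y : R := \sum_i \sum_j (adj i j)%:R * Y i j.

Lemma frob_adjmxE Y : frob (adjmx R adj) Y = adj_pairing Y.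
Proof.
rewrite /frob /mxtrace; under eq_bigr => i _ do rewrite mxE.
rewrite exchange_big; apply: eq_bigr => i _.
by apply: eq_bigr => j _; rewrite !mxE.
Qed.

Lemma adj_pairingD Y1 Y2 : adj_pairing (Y1 + Y2) = adj_pairing Y1 + adj_pairing Y2.
Proof.
rewrite /adj_pairing -big_split; apply: eq_bigr => i _.
by rewrite -big_split; apply: eq_bigr => j _; rewrite mxE mulrDr.
Qed.

Lemma adj_pairingZ a Y : adj_pairing (a *: Y) = a * adj_pairing Y.
Proof.
rewrite /adj_pairing mulr_sumr; apply: eq_bigr => i _.
by rewrite mulr_sumr; apply: eq_bigr => j _; rewrite mxE mulrCA.
Qed.

Lemma adj_pairing_ge0 Y : (forall i j, 0 <= Y i j) -> 0 <= adj_pairing Y.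
Proof. by move=> Y_ge0; do 2!apply: sumr_ge0 => ? _; rewrite mulr_ge0. Qed.

Lemma adj_pairing_eq0 Y : vanishes_on_edges Y -> adj_pairing Y = 0.
Proof.
move=> vanY; rewrite /adj_pairing big1 // => i _; rewrite big1 // => j _.
by case aij: (adj i j); rewrite ?mul0r // vanY ?mulr0.
Qed.

Hypothesis simple_adj : simple_graph adj.

Lemma adj_neq i j : adj i j -> i != j.
Proof. by case: simple_adj => irr _ aij; apply: contraTneq aij => ->. Qed.

Lemma vanishes_scalar1 : vanishes_on_edges 1%:M.
Proof. by move=> i j /adj_neq /negbTE ij; rewrite mxE ij. Qed.

(* Test the bordered form at [x = e_i + e_j], [s = -1]: [2 - 4 + t >= 0]. *)
Lemma feasP_edge_ge2 t Y i j :
  feasP t Y -> vanishes_on_edges Y -> adj i j -> 2 <= t.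
Proof.
case/feasPE=> _ psdY diagY _ vanY aij.
have := psdY (fun k => (k == i)%:R + (k == j)%:R) (-1).
have aji : adj j i by case: simple_adj => _ sym; rewrite sym.
have delta_sum1 m : \sum_k (k == m)%:R = 1 :> R.
  by rewrite -[RHS](sum_deltal (fun=> 1) m); apply: eq_bigr => k _; rewrite mulr1.
rewrite /border_qform qform_pair !diagY !vanY // big_split /= !delta_sum1.
lra.
Qed.

Lemma feasP_vanishing t Y : feasP t Y ->
  exists Y', feasP (t * (1 + adj_pairing Y)) Y' /\ vanishes_on_edges Y'.
Proof.
case: simple_adj => irr sym /feasPE[symY psdY diagY Y_ge0].
set d := adj_pairing Y; have d_ge0 : 0 <= d by exact: adj_pairing_ge0.
have d1_gt0 : 0 < 1 + d by rewrite ltr_pwDl.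
pose E := \matrix_(i, j) ((adj i j)%:R * Y i j).
pose Y' := (1 + d)^-1 *: (Y + (d *: 1%:M - E)).
have psdD x : 0 <= qform (d *: 1%:M - E) x.
  have E_le : qform E x <= d * \sum_i x i ^+ 2.
    have -> : d = \sum_i \sum_j E i j.
      by apply: eq_bigr => i _; apply: eq_bigr => j _; rewrite mxE.
    by apply: qform_le_sum_sqr => i j; rewrite mxE mulr_ge0.
  rewrite qformD -scaleN1r !qformZ qform_scalar1; lra.
exists Y'; split; last first.
  move=> i j aij; rewrite !mxE aij (negbTE (adj_neq aij)) mulr0n mulr0 mul1r.
  by rewrite add0r addrN mulr0.
apply/feasPE; split.
- have symYE i j : Y j i = Y i j by rewrite -{1}symY mxE.
  by apply/matrixP => i j; rewrite !mxE sym eq_sym symYE.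
- have c_gt0 : 0 < (1 + d)^-1 by rewrite invr_gt0.
  by have := border_psd_scale c_gt0 (border_psdD psdY psdD); rewrite invrK.
- move=> i; rewrite !mxE (negbTE (irr i)) eqxx diagY mul0r subr0 mulr1n mulr1.
  by rewrite mulVf ?gt_eqF.
- move=> i j; rewrite !mxE mulr_ge0 ?invr_ge0 ?(ltW d1_gt0) //.
  have := Y_ge0 i j; case: (adj i j); case: (i == j);
    rewrite /= ?mulr1n ?mulr0n ?mulr1 ?mulr0 ?mul1r ?mul0r; lra.
Qed.

End EdgeVanishing.

Section OptimalValues.
Variables (R : realType) (n : nat) (adj : rel 'I_n).
Hypothesis simple_adj : simple_graph adj.
Implicit Types (Y : 'M[R]_n) (t e : R).

Local Open Scope classical_set_scope.

Let Cset t := [set v | exists Y, feasP t Y /\ v = (1/2) * frob (adjmx R adj) Y].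
Let Tset := [set t | exists Y, feasP t Y /\ vanishes_on_edges adj Y].

Let Cset_lbound t : lbound (Cset t) 0.
Proof.
move=> _ [Y [/feasPE[_ _ _ Y_ge0] ->]].
by have := adj_pairing_ge0 adj Y_ge0; rewrite frob_adjmxE; lra.
Qed.

Let Cset_neq0 t : 1 <= t -> Cset t !=set0.
Proof.
move=> t_ge1; exists ((1/2) * frob (adjmx R adj) (const_mx 1)), (const_mx 1).
by split=> //; apply: feasP_const1.
Qed.

Lemma Cval_le t Y : feasP t Y -> Cval adj t <= adj_pairing adj Y / 2.
Proof.
move=> feasY; apply: (@ge_inf _ (Cset t)); first by exists 0; apply: (@Cset_lbound t).
by exists Y; split=> //; rewrite frob_adjmxE mul1r mulrC.
Qed.

Lemma Cval_ge0 t : 1 <= t -> 0 <= Cval adj t.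
Proof. by move=> t_ge1; apply: lb_le_inf (Cset_neq0 t_ge1) (@Cset_lbound t). Qed.

Lemma Cval_approx t e : 1 <= t -> 0 < e ->
  exists Y, feasP t Y /\ adj_pairing adj Y / 2 < Cval adj t + e.
Proof.
move=> t_ge1 e_gt0; have lt_inf : inf (Cset t) < Cval adj t + e by rewrite ltrDl.
have [_ [Y [feasY ->]] ltY] := inf_lt (Cset_neq0 t_ge1) lt_inf.
by rewrite frob_adjmxE mul1r mulrC in ltY; exists Y.
Qed.

Let Tset_lbound : lbound Tset 0.
Proof. by move=> t [Y [feasY _]]; apply: feasP_ge0 feasY. Qed.

Lemma theta_minus_le t Y : feasP t Y -> vanishes_on_edges adj Y -> theta_minus R adj <= t.
Proof.
move=> feasY vanY; apply: (@ge_inf _ Tset); first by exists 0; apply: Tset_lbound.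
by exists Y.
Qed.

Lemma theta_minus_approx e : 0 < e ->
  exists t0 Y, [/\ feasP t0 Y, vanishes_on_edges adj Y & t0 < theta_minus R adj + e].
Proof.
move=> e_gt0; have Tset_neq0 : Tset !=set0.
  by exists n%:R, 1%:M; split; [apply: feasP_scalar1 | apply: vanishes_scalar1].
have lt_inf : inf Tset < theta_minus R adj + e by rewrite ltrDl.
by have [t0 [Y [feasY vanY]] ltt0] := inf_lt Tset_neq0 lt_inf; exists t0, Y.
Qed.

Lemma Cval_gt0 t : 1 <= t -> t < theta_minus R adj -> 0 < Cval adj t.
Proof.
move=> t_ge1 lt_t_theta; rewrite lt_neqAle eq_sym Cval_ge0 // andbT.
apply/eqP => C0; have t_gt0 : 0 < t by lra.
set e := (theta_minus R adj - t) / (2 * t).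
have e_gt0 : 0 < e by rewrite divr_gt0 ?subr_gt0 ?mulr_gt0.
have te : t * (2 * e) = theta_minus R adj - t by rewrite /e; field; rewrite gt_eqF.
have [Y [feasY]] := Cval_approx t_ge1 e_gt0; rewrite C0 add0r => ltY.
have [Y' [feasY' vanY']] := feasP_vanishing simple_adj feasY.
have := theta_minus_le feasY' vanY'; nra.
Qed.

Lemma Cval_le0 t : 1 <= t -> theta_minus R adj <= t -> Cval adj t <= 0.
Proof.
move=> t_ge1 theta_le_t; apply/ler_addgt0Pr => e e_gt0; rewrite add0r.
have feasJ := feasP_const1 n (lexx (1 : R)).
set K := adj_pairing adj (const_mx 1 : 'M[R]_n).
have K_ge0 : 0 <= K by apply: adj_pairing_ge0 => i j; rewrite mxE.
have [[i [j aij]] | no_edge] := pselect (exists i j, adj i j); last first.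
  have := Cval_le (feasP_const1 n t_ge1); rewrite adj_pairing_eq0; first lra.
  by move=> i j aij; case: no_edge; exists i, j.
set g := e / (K + 1); have g_gt0 : 0 < g by rewrite divr_gt0 // ltr_pwDr.
have gK : g * (K + 1) = e by rewrite /g mulfVK // gt_eqF // ltr_pwDr.
have [t0 [Y0 [feasY0 vanY0 lt_t0]]] := theta_minus_approx g_gt0.
have t0_ge2 := feasP_edge_ge2 simple_adj feasY0 vanY0 aij.
have [t0_le_t | lt_t_t0] := lerP t0 t.
  by have := Cval_le (feasP_le feasY0 t0_le_t); rewrite adj_pairing_eq0 //; lra.
set l := (t - 1) / (t0 - 1).
have t0_1 : t0 - 1 != 0 by rewrite subr_eq0 gt_eqF //; lra.
have l_t0 : l * (t0 - 1) = t - 1 by rewrite /l mulfVK.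
have l01 : 0 <= l <= 1 by apply/andP; split; nra.
have := Cval_le (feasP_convex l01 feasY0 feasJ).
rewrite adj_pairingD !adj_pairingZ adj_pairing_eq0 // -/K.
have -> : l * t0 + (1 - l) * 1 = t by lra.
nra.
Qed.

End OptimalValues.

Theorem mainTheorem5 (R : realType) (n : nat) (adj : rel 'I_n) :
  simple_graph adj ->
  forall t : R, 1 <= t -> (0 < Cval adj t <-> t < theta_minus R adj).
Proof.
move=> simple_adj t t_ge1; split=> [C_gt0 | ]; last exact: Cval_gt0.
rewrite ltNge; apply: contraTN C_gt0 => /(Cval_le0 simple_adj t_ge1).
by rewrite -leNgt.
Qed.
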